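(* Let $m\ge 2$, let $C=uRM(m)$ (defined in the context) with base qubits $b_0,\dots,b_m$ and parity labels $L(q)$. For each $i\in\{0,\dots,m\}$, the logical operator $i$ of $C$, i.e. the codeword $x^{(i)}\in C$ with $x^{(i)}_{b_i}=1$ and $x^{(i)}_{b_j}=0$ for $j\ne i$ (whose support is the set of qubits $q$ with $i\in L(q)$), has weight exactly $2^{m-1}$.
   Context: Let $a=\lceil m/2\rceil$, $b=\lfloor m/2\rfloor$. Place $2^m$ bits (qubits) on a grid with $2^b$ rows and $2^a$ columns, positions $(i,j)$, row $1$ on top, column $1$ leftmost. Bulk checks: for $1\le i<2^b$, $1\le j<2^a$, the set $\{(i,j),(i+1,j),(i,j+1),(i+1,j+1)\}$. Boundary checks: for a line of $L=2^n$ positions $1,\dots,L$, each $s\in\{1,\dots,n-1\}$, $w=2^s$, and integer $t$ with $-L/(2w)+1\le t\le L/(2w)-1$, $S(w,t)=\{L/2-w/2+wt,\ L/2-w/2+wt+1,\ L/2+w/2+wt,\ L/2+w/2+wt+1\}$; these with $n=a$ on the top row ($j\mapsto(1,j)$) and with $n=b$ on the leftmost column ($i\mapsto(i,1)$). $C=uRM(m)$ is the set of $x\in\mathbb{F}_2^{2^m}$ with even sum over every check; it has dimension $m+1$. Base qubits are $m+1$ positions $b_0,\dots,b_m$ such that $x\mapsto(x_{b_0},\dots,x_{b_m})$ is a bijection $C\to\mathbb{F}_2^{m+1}$. The parity label of a qubit $q$ is the unique $L(q)\subseteq\{0,\dots,m\}$ with $x_q=\sum_{i\in L(q)}x_{b_i}$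 for all $x\in C$. *)

From mathcomp Require Import all_boot all_order all_algebra.
Set Implicit Arguments. Unset Strict Implicit. Unset Printing Implicit Defensive.
Import Order.TTheory GRing.Theory Num.Theory.

Definition acol (m : nat) : nat := uphalf m.
Definition brow (m : nat) : nat := m./2.

(* A qubit is a grid position (row, column), 0-indexed internally:
   the ordinal pair (r, c) denotes the paper's position (r+1, c+1). *)
Definition qubit (m : nat) : finType := ('I_(2 ^ brow m) * 'I_(2 ^ acol m))%type.

Definition row1 {m} (q : qubit m) : nat := (val q.1).+1.
Definition col1 {m} (q : qubit m) : nat := (val q.2).+1.

Definition bulk_check (m i j : nat) : {set qubit m} :=
  [set q : qubit m | (row1 q \in [:: i; i.+1]) && (col1 q \in [:: j; j.+1])].

Definition bnd_pos (n s : nat) (t : int) : seq int :=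
  let L2 := Posz ((2 ^ n) %/ 2) in
  let w2 := Posz ((2 ^ s) %/ 2) in
  let w := Posz (2 ^ s) in
  [:: (L2 - w2 + w * t)%R; (L2 - w2 + w * t + 1)%R;
      (L2 + w2 + w * t)%R; (L2 + w2 + w * t + 1)%R].

Definition bnd_ok (n s : nat) (t : int) : Prop :=
  (1 <= s <= n - 1)%N /\
  (- Posz (2 ^ n %/ (2 * 2 ^ s)) + 1 <= t)%R /\
  (t <= Posz (2 ^ n %/ (2 * 2 ^ s)) - 1)%R.

Definition top_check (m s : nat) (t : int) : {set qubit m} :=
  [set q : qubit m | (row1 q == 1%N) && (Posz (col1 q) \in bnd_pos (acol m) s t)].

Definition left_check (m s : nat) (t : int) : {set qubit m} :=
  [set q : qubit m | (col1 q == 1%N) && (Posz (row1 q) \in bnd_pos (brow m) s t)].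

Definition is_check {m : nat} (S : {set qubit m}) : Prop :=
  (exists i j, [/\ (1 <= i < 2 ^ brow m)%N, (1 <= j < 2 ^ acol m)%N
                 & S = bulk_check m i j])
  \/ (exists s t, bnd_ok (acol m) s t /\ S = top_check m s t)
  \/ (exists s t, bnd_ok (brow m) s t /\ S = left_check m s t).

(* Binary words on the qubits (elements of F_2^{2^m}, with bool = F_2). *)
Definition word (m : nat) := {ffun qubit m -> bool}.

Definition even_on {m} (x : word m) (S : {set qubit m}) : bool :=
  ~~ odd #|[set q in S | x q]|.

Definition in_uRM {m : nat} (x : word m) : Prop :=
  forall S : {set qubit m}, is_check S -> even_on x S.

(* b_0..b_m are base qubits: x |-> (x_{b_0},...,x_{b_m}) is a bijection C -> F_2^{m+1}. *)
Definition base_qubits {m : nat} (b : 'I_m.+1 -> qubit m) : Prop :=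
  (forall x y : word m, in_uRM x -> in_uRM y ->
     (forall k, x (b k) = y (b k)) -> x = y)
  /\ (forall v : 'I_m.+1 -> bool, exists x : word m,
        in_uRM x /\ forall k, x (b k) = v k).

Definition weight {m} (x : word m) : nat := #|[set q | x q]|.

(* The bulk checks make every codeword affine on the grid:
   x(r,c) = x(r,1) + x(1,c) + x(1,1).  On a line U of length 2^n the boundary
   checks say that the jump U(q-1) + U(q) depends only on the 2-adic valuation
   of q.  Hence a line is either constant or, k being the least exponent with a
   jump at 2^k, constant on blocks of length 2^k and flipped between blocks 2y
   and 2y+1, so that exactly half of its entries are 1.  A logical operator is
   not constant, so its top row or its left column is balanced, and by
   affinity so is every row, resp. every column. *)
From mathcomp Require Import all_boot all_order all_algebra.
From mathcomp Require Import zify ring.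

Set Implicit Arguments.
Unset Strict Implicit.
Unset Printing Implicit Defensive.

Lemma pow2_gt0 k : 0 < 2 ^ k.
Proof. by rewrite expn_gt0. Qed.

Lemma logn2_lt n q : 0 < q < 2 ^ n -> logn 2 q < n.
Proof.
case/andP=> q_gt0 q_lt; rewrite -(ltn_exp2l _ _ (ltnSn 1)).
exact: leq_ltn_trans (dvdn_leq q_gt0 (pfactor_dvdnn 2 q)) q_lt.
Qed.

Lemma big_nat_offset a w (F : nat -> nat) :
  \sum_(a <= p < a + w) F p = \sum_(0 <= i < w) F (a + i).
Proof. by rewrite -{1}[a]add0n big_addn addKn; apply: eq_bigr => i _; rewrite addnC. Qed.

Definition balanced n (U : nat -> bool) := \sum_(0 <= p < 2 ^ n) U p = 2 ^ n.-1.

Lemma balanced_addb n k U : 0 < n -> balanced n U -> balanced n (fun p => k (+) U p).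
Proof.
rewrite /balanced => n_gt0 U_bal; case: k => //=.
have sum_negb : \sum_(0 <= p < 2 ^ n) (~~ U p : nat) + \sum_(0 <= p < 2 ^ n) (U p : nat) = 2 ^ n.
  rewrite -big_split /= (eq_bigr (fun=> 1)) ?sum_nat_const_nat ?subn0 ?muln1 //.
  by move=> p _; case: (U p).
have : 2 ^ n = 2 * 2 ^ n.-1 by rewrite -expnS prednK.
lia.
Qed.

Lemma sum_xor_balanced R n (u v : nat -> bool) : 0 < n -> balanced n v ->
  \sum_(0 <= r < R) \sum_(0 <= c < 2 ^ n) (u r (+) v c : nat) = R * 2 ^ n.-1.
Proof.
move=> n_gt0 v_bal; rewrite (eq_bigr (fun=> 2 ^ n.-1)) ?sum_nat_const_nat ?subn0 //.
by move=> r _; apply: balanced_addb.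
Qed.

Lemma sum_flip_halves M w (U : nat -> bool) :
    (forall y i, y < M -> i < w -> U (y * w.*2 + w + i) = ~~ U (y * w.*2 + i)) ->
  \sum_(0 <= p < M * w.*2) U p = M * w.
Proof.
move=> U_flip; rewrite big_nat_mul.
rewrite (eq_big_nat _ _ (F2 := fun=> w)) ?sum_nat_const_nat ?subn0 //.
move=> y /andP[_ y_lt]; have -> : y.+1 * w.*2 = y * w.*2 + w + w by rewrite mulSn addnC -addnA addnn.
rewrite (big_cat_nat _ (n := y * w.*2 + w)) ?leq_addr //=.
rewrite (big_nat_offset (y * w.*2)) (big_nat_offset (y * w.*2 + w)) -big_split /=.
rewrite (eq_big_nat _ _ (F2 := fun=> 1)) ?sum_nat_const_nat ?subn0 ?muln1 //.
by move=> i /andP[_ i_lt]; rewrite U_flip //; case: (U _).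
Qed.

Definition jump (U : nat -> bool) q := U q.-1 (+) U q.

Section Blocks.

Variables (n k : nat) (U : nat -> bool).
Hypothesis jump_off_block : forall q, 0 < q < 2 ^ n -> ~~ (2 ^ k %| q) -> ~~ jump U q.
Hypothesis jump_odd_block : forall y, (2 * y + 1) * 2 ^ k < 2 ^ n -> jump U ((2 * y + 1) * 2 ^ k).

Lemma block_const z i : i < 2 ^ k -> z * 2 ^ k + i < 2 ^ n ->
  U (z * 2 ^ k + i) = U (z * 2 ^ k).
Proof.
elim: i => [|i IHi] i_lt zi_lt; first by rewrite addn0.
have zi_lt' : z * 2 ^ k + i < 2 ^ n by rewrite (ltn_trans _ zi_lt) // ltn_add2l.
rewrite -IHi ?(ltnW i_lt) //.
have not_dvd : ~~ (2 ^ k %| z * 2 ^ k + i.+1).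
  by rewrite dvdn_addr ?dvdn_mull //; apply/negP => /dvdn_leq; lia.
have := jump_off_block _ not_dvd; rewrite zi_lt addnS /jump /= => /(_ isT).
by case: (U _); case: (U _).
Qed.

Lemma block_flip y i : i < 2 ^ k -> (2 * y + 1) * 2 ^ k + i < 2 ^ n ->
  U ((2 * y + 1) * 2 ^ k + i) = ~~ U (2 * y * 2 ^ k + i).
Proof.
move=> i_lt yi_lt; have pow_gt0 := pow2_gt0 k.
have y_lt : (2 * y + 1) * 2 ^ k < 2 ^ n := leq_ltn_trans (leq_addr _ _) yi_lt.
rewrite !block_const //; try lia.
have := jump_odd_block y_lt; rewrite /jump.
have -> : ((2 * y + 1) * 2 ^ k).-1 = 2 * y * 2 ^ k + (2 ^ k).-1 by lia.
by rewrite block_const; [case: (U _); case: (U _) | lia | lia].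
Qed.

Lemma block_balanced : k < n -> balanced n U.
Proof.
move=> k_lt; have pow_n : 2 ^ n = 2 ^ (n - k.+1) * (2 ^ k).*2.
  by rewrite -mul2n -expnS -expnD subnK.
rewrite /balanced pow_n sum_flip_halves -?expnD; first by congr (2 ^ _); lia.
move=> y i y_lt i_lt; have -> : y * (2 ^ k).*2 = 2 * y * 2 ^ k by lia.
have -> : 2 * y * 2 ^ k + 2 ^ k = (2 * y + 1) * 2 ^ k by rewrite mulnDl mul1n.
by rewrite block_flip // pow_n; nia.
Qed.

End Blocks.

Section BoundaryLine.

Variables (n : nat) (U : nat -> bool).
Hypothesis jump_shift : forall j c, (2 * c + 3) * 2 ^ j < 2 ^ n ->
  jump U ((2 * c + 1) * 2 ^ j) = jump U ((2 * c + 3) * 2 ^ j).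

Lemma jump_odd_mul j c : (2 * c + 1) * 2 ^ j < 2 ^ n ->
  jump U ((2 * c + 1) * 2 ^ j) = jump U (2 ^ j).
Proof.
elim: c => [|c IHc]; first by rewrite mul1n.
have -> : 2 * c.+1 + 1 = 2 * c + 3 by lia.
by move=> c_lt; rewrite -jump_shift // IHc //; nia.
Qed.

Lemma jump_pow2_logn q : 0 < q < 2 ^ n -> jump U q = jump U (2 ^ logn 2 q).
Proof.
case/andP=> q_gt0 q_lt; set j := logn 2 q.
have [c odd_c q_eq] := pfactor_coprime (isT : prime 2) q_gt0; rewrite coprime2n in odd_c.
have {q_eq} q_eq : q = (2 * c./2 + 1) * 2 ^ j.
  by rewrite {1}q_eq; congr (_ * _); have := odd_double_half c; rewrite odd_c; lia.
by rewrite q_eq jump_odd_mul // -q_eq.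
Qed.

Lemma line_const_or_balanced : (forall p, p < 2 ^ n -> U p = U 0) \/ balanced n U.
Proof.
have [/existsP[j0 jump_j0] | no_jump] := boolP [exists j : 'I_n, jump U (2 ^ j)].
  right; have jump_ex : exists k, (k < n) && jump U (2 ^ k) by exists j0; rewrite ltn_ord.
  case: (ex_minnP jump_ex) => k /andP[k_lt jump_k] k_min.
  apply: (block_balanced (k := k)) => // [q q_range k_ndvd | y y_lt].
    rewrite jump_pow2_logn //; apply/negP => jump_q.
    have := k_min _ (introT andP (conj (logn2_lt q_range) jump_q)).
    by rewrite -pfactor_dvdn //; [apply/negP | case/andP: q_range].
  by rewrite jump_odd_mul.
left; elim=> [//|p IHp] p_lt; rewrite -IHp ?(ltnW p_lt) //.
have p_range : 0 < p.+1 < 2 ^ n by rewrite p_lt.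
have := jump_pow2_logn p_range; rewrite {1}/jump /=.
have /negPf -> : ~~ jump U (2 ^ logn 2 p.+1).
  by apply/negP => jump_p; apply: (elimN existsP no_jump); exists (Ordinal (logn2_lt p_range)).
by case: (U p); case: (U p.+1).
Qed.

End BoundaryLine.

Definition bnd_index n j c : int := (Posz c - Posz (2 ^ (n - j.+2)) + 1)%R.

Lemma bnd_width n j c : (2 * c + 3) * 2 ^ j < 2 ^ n -> j.+2 <= n.
Proof.
move=> c_lt; rewrite -(ltn_exp2l _ _ (ltnSn 1)) expnS.
by apply: leq_ltn_trans c_lt; rewrite leq_mul2r; apply/orP; right; lia.
Qed.

Lemma bnd_pos_index n j c : j.+2 <= n ->
  bnd_pos n j.+1 (bnd_index n j c) =
  [:: Posz ((2 * c + 1) * 2 ^ j); Posz ((2 * c + 1) * 2 ^ j + 1);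
      Posz ((2 * c + 3) * 2 ^ j); Posz ((2 * c + 3) * 2 ^ j + 1)].
Proof.
move=> j_le; have pow_n : 2 ^ n = 2 * (2 ^ (n - j.+2) * 2 ^ j.+1).
  by rewrite mulnCA -expnS -expnD subnK.
rewrite /bnd_pos /bnd_index pow_n expnS !mulKn //.
by congr [:: _; _; _; _]; rewrite !PoszD !PoszM; ring.
Qed.

Lemma mem_bnd_index n j c k : j.+2 <= n ->
  (Posz k.+1 \in bnd_pos n j.+1 (bnd_index n j c)) =
  (k \in [:: ((2 * c + 1) * 2 ^ j).-1; (2 * c + 1) * 2 ^ j;
             ((2 * c + 3) * 2 ^ j).-1; (2 * c + 3) * 2 ^ j]).
Proof.
move=> j_le; rewrite bnd_pos_index // !inE !eqz_nat.
have A_gt0 : 0 < (2 * c + 1) * 2 ^ j by rewrite muln_gt0 pow2_gt0 addn1.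
have B_gt0 : 0 < (2 * c + 3) * 2 ^ j by rewrite muln_gt0 pow2_gt0 addn3.
set A := (2 * c + 1) * 2 ^ j in A_gt0 *; set B := (2 * c + 3) * 2 ^ j in B_gt0 *.
lia.
Qed.

Lemma bnd_ok_index n j c : (2 * c + 3) * 2 ^ j < 2 ^ n -> bnd_ok n j.+1 (bnd_index n j c).
Proof.
move=> c_lt; have j_le := bnd_width c_lt.
have pow_split : 2 ^ n = 2 ^ (n - j.+2) * 2 ^ j.+2 by rewrite -expnD subnK.
have c_le : 2 * c + 3 < 4 * 2 ^ (n - j.+2).
  rewrite -(ltn_pmul2r (pow2_gt0 j)).
  by have -> : 4 * 2 ^ (n - j.+2) * 2 ^ j = 2 ^ n by rewrite pow_split !expnS; ring.
rewrite /bnd_ok /bnd_index.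
have -> : 2 ^ n %/ (2 * 2 ^ j.+1) = 2 ^ (n - j.+2) by rewrite -expnS pow_split mulnK ?pow2_gt0.
split; lia.
Qed.

Definition ord_pow2 k r : 'I_(2 ^ k) := insubd (Ordinal (pow2_gt0 k)) r.

Definition grid_qubit m r c : qubit m := (ord_pow2 (brow m) r, ord_pow2 (acol m) c).

Definition entry m (x : word m) r c : bool := x (grid_qubit m r c).

Lemma val_ord_pow2 k r : r < 2 ^ k -> ord_pow2 k r = r :> nat.
Proof. by move=> r_lt; rewrite val_insubd r_lt. Qed.

Lemma entry_qubit m (x : word m) (q : qubit m) : x q = entry x q.1 q.2.
Proof. by case: q => r c; rewrite /entry /grid_qubit /ord_pow2 !valKd. Qed.

Lemma eq_grid_qubit m (q : qubit m) r c : r < 2 ^ brow m -> c < 2 ^ acol m ->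
  (q == grid_qubit m r c) = (q.1 == r :> nat) && (q.2 == c :> nat).
Proof. by case: q => q1 q2 r_lt c_lt; rewrite xpair_eqE /= -!val_eqE /= !val_ord_pow2. Qed.

Lemma weight_sum_entry m (x : word m) :
  weight x = \sum_(0 <= r < 2 ^ brow m) \sum_(0 <= c < 2 ^ acol m) entry x r c.
Proof.
rewrite /weight -sum1_card big_mkcond /= big_mkord.
rewrite (eq_bigr (fun r : 'I__ => \sum_(c < 2 ^ acol m) (entry x r c : nat)));
  last by move=> r _; rewrite big_mkord.
by rewrite pair_bigA /=; apply: eq_bigr => q _; rewrite inE entry_qubit; case: (entry _ _ _).
Qed.

Section Codeword.

Variables (m : nat) (x : word m).
Hypothesis x_code : in_uRM x.

Lemma check_parity4 (S : {set qubit m}) q1 q2 q3 q4 : is_check S ->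
  uniq [:: q1; q2; q3; q4] -> S =i [:: q1; q2; q3; q4] ->
  x q1 (+) x q2 (+) x q3 (+) x q4 = false.
Proof.
move=> S_check uniq_q S_eq; have := x_code S_check; rewrite /even_on.
have -> : #|[set q in S | x q]| = count x [:: q1; q2; q3; q4].
  rewrite -size_filter -(card_uniqP (filter_uniq _ uniq_q)).
  by apply: eq_card => q; rewrite !inE mem_filter S_eq andbC.
by rewrite /=; case: (x q1); case: (x q2); case: (x q3); case: (x q4).
Qed.

Lemma entry_bulk r c : r.+1 < 2 ^ brow m -> c.+1 < 2 ^ acol m ->
  entry x r c (+) entry x r.+1 c (+) entry x r c.+1 (+) entry x r.+1 c.+1 = false.
Proof.
move=> r_lt c_lt; have r_lt' := ltnW r_lt; have c_lt' := ltnW c_lt.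
apply: (check_parity4 (S := bulk_check m r.+1 c.+1)).
- by left; exists r.+1, c.+1.
- by rewrite /= !inE !eq_grid_qubit //= !val_ord_pow2 // !(ltn_eqF (ltnSn _)) !(gtn_eqF (ltnSn _)) !eqxx.
move=> q; rewrite !inE /row1 /col1 !eqSS !eq_grid_qubit //.
by case: (q.1 == r :> nat); case: (q.1 == r.+1 :> nat); case: (q.2 == c :> nat);
   case: (q.2 == c.+1 :> nat).
Qed.

Lemma entry_affine r c : r < 2 ^ brow m -> c < 2 ^ acol m ->
  entry x r c = entry x r 0 (+) entry x 0 c (+) entry x 0 0.
Proof.
elim: r c => [|r IHr] c r_lt c_lt; first by case: (entry x 0 0); case: (entry x 0 c).
elim: c c_lt => [|c IHc] c_lt; first by case: (entry x r.+1 0); case: (entry x 0 0).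
have := entry_bulk r_lt c_lt.
rewrite IHc ?(ltnW c_lt) // (IHr c) ?(IHr c.+1) ?(ltnW r_lt) ?(ltnW c_lt) //.
by case: (entry x r.+1 0); case: (entry x r 0); case: (entry x 0 c);
   case: (entry x 0 c.+1); case: (entry x 0 0); case: (entry x r.+1 c.+1).
Qed.

Lemma boundary_jump_shift n (f : nat -> qubit m) (coord : qubit m -> nat)
    (chk : nat -> int -> {set qubit m}) :
    (forall s t, bnd_ok n s t -> is_check (chk s t)) ->
    (forall k, k < 2 ^ n -> coord (f k) = k) ->
    (forall s t q, (q \in chk s t) = (q == f (coord q)) && (Posz (coord q).+1 \in bnd_pos n s t)) ->
  forall j c, (2 * c + 3) * 2 ^ j < 2 ^ n ->
  jump (fun k => x (f k)) ((2 * c + 1) * 2 ^ j) = jump (fun k => x (f k)) ((2 * c + 3) * 2 ^ j).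
Proof.
move=> chk_check coord_f mem_chk j c c_lt; have j_le := bnd_width c_lt.
have A_gt0 : 0 < (2 * c + 1) * 2 ^ j by rewrite muln_gt0 pow2_gt0 addn1.
have B_eq : (2 * c + 3) * 2 ^ j = (2 * c + 1) * 2 ^ j + 2 * 2 ^ j by rewrite -mulnDl -addnA.
have pow_gt0 := pow2_gt0 j.
set P := [:: ((2 * c + 1) * 2 ^ j).-1; (2 * c + 1) * 2 ^ j;
             ((2 * c + 3) * 2 ^ j).-1; (2 * c + 3) * 2 ^ j].
have P_lt k : k \in P -> k < 2 ^ n.
  by move: c_lt; rewrite !inE B_eq; set A := (_ * 2 ^ j) in A_gt0 *; lia.
have uniq_fP : uniq (map f P).
  rewrite map_inj_in_uniq; first by rewrite /P /= !inE B_eq; lia.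
  by move=> k1 k2 /P_lt k1_lt /P_lt k2_lt /(congr1 coord); rewrite !coord_f.
have mem_fP : chk j.+1 (bnd_index n j c) =i map f P.
  move=> q; rewrite mem_chk mem_bnd_index //.
  apply/andP/mapP => [[/eqP q_eq coord_q] | [k k_P ->]]; first by exists (coord q).
  by rewrite coord_f ?P_lt // eqxx.
have := check_parity4 (chk_check _ _ (bnd_ok_index c_lt)) uniq_fP mem_fP.
by rewrite /jump; case: (x _); case: (x _); case: (x _); case: (x _).
Qed.

Lemma top_jump_shift j c : (2 * c + 3) * 2 ^ j < 2 ^ acol m ->
  jump (entry x 0) ((2 * c + 1) * 2 ^ j) = jump (entry x 0) ((2 * c + 3) * 2 ^ j).
Proof.
apply: (boundary_jump_shift (f := grid_qubit m 0) (coord := fun q => q.2 : nat) (chk := top_check m)).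
- by move=> s t bnd; right; left; exists s, t.
- exact: val_ord_pow2.
by move=> s t q; rewrite inE eqSS eq_grid_qubit ?pow2_gt0 // eqxx andbT.
Qed.

Lemma left_jump_shift j c : (2 * c + 3) * 2 ^ j < 2 ^ brow m ->
  jump (entry x ^~ 0) ((2 * c + 1) * 2 ^ j) = jump (entry x ^~ 0) ((2 * c + 3) * 2 ^ j).
Proof.
apply: (boundary_jump_shift (f := grid_qubit m ^~ 0) (coord := fun q => q.1 : nat) (chk := left_check m)).
- by move=> s t bnd; right; right; exists s, t.
- exact: val_ord_pow2.
by move=> s t q; rewrite inE eqSS eq_grid_qubit ?pow2_gt0 // eqxx andbC.
Qed.

End Codeword.

Lemma acol_brow_sum m : acol m + brow m = m.
Proof. by rewrite /acol /brow uphalf_half -addnA addnn odd_double_half. Qed.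

Lemma brow_gt0 m : 2 <= m -> 0 < brow m.
Proof. exact: half_leq. Qed.

Theorem lemma3 (m : nat) (b : 'I_m.+1 -> qubit m) (i : 'I_m.+1) (x : word m) :
  (2 <= m)%N ->
  base_qubits b ->
  in_uRM x ->
  (forall k : 'I_m.+1, x (b k) = (k == i)) ->
  weight x = 2 ^ m.-1.
Proof.
move=> m_ge2 _ x_code x_b.
have b_gt0 := brow_gt0 m_ge2; have m_eq := acol_brow_sum m.
have a_gt0 : 0 < acol m by rewrite /acol uphalf_half addnC addn_gt0 b_gt0.
have affine := entry_affine x_code.
have [top_bal | left_bal] : balanced (acol m) (entry x 0) \/ balanced (brow m) (entry x ^~ 0).
  have [top_const | ] := line_const_or_balanced (top_jump_shift x_code); last by left.
  have [left_const | ] := line_const_or_balanced (left_jump_shift x_code); last by right.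
  exfalso.
  have x_const q : x q = entry x 0 0.
    by rewrite entry_qubit affine // left_const // top_const // addbb.
  have [j j_neq_i] : exists j : 'I_m.+1, j != i.
    case: (i =P ord0) => [-> | /eqP i_neq0]; last by exists ord0; rewrite eq_sym.
    by exists ord_max; apply/eqP => /(congr1 val) /=; lia.
  by have := x_b j; rewrite (negbTE j_neq_i) x_const -(x_const (b i)) x_b eqxx.
- rewrite weight_sum_entry (eq_big_nat _ _ (F2 := fun r =>
    \sum_(0 <= c < 2 ^ acol m) ((entry x r 0 (+) entry x 0 0) (+) entry x 0 c : nat))).
    by rewrite sum_xor_balanced // -expnD; congr (2 ^ _); lia.
  by move=> r /andP[_ r_lt]; apply: eq_big_nat => c /andP[_ c_lt]; rewrite affine // addbAC.
rewrite weight_sum_entry exchange_big_nat /= (eq_big_nat _ _ (F2 := fun c =>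
    \sum_(0 <= r < 2 ^ brow m) ((entry x 0 c (+) entry x 0 0) (+) entry x r 0 : nat))).
  by rewrite sum_xor_balanced // -expnD; congr (2 ^ _); lia.
move=> c /andP[_ c_lt]; apply: eq_big_nat => r /andP[_ r_lt].
by rewrite affine // (addbC (entry x r 0)) addbAC.
Qed.
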